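(* Let $q$ be a prime power and $n \ge 2$ an integer. For any $\epsilon_1, \epsilon_2 > 0$ there are numbers $\epsilon_3 = \epsilon_3(\epsilon_1, q) > 0$ and $C = C(\epsilon_1,\epsilon_2,\epsilon_3,n,q)$ such that, if an $n$-tuple $(T_1,\ldots,T_n)$ of positive integers satisfies $T_1\cdots T_n > C$ and a non-negative integer $k$ satisfies $k < \epsilon_3 T_1\cdots T_n$, then choosing a periodic sequence $s:\mathbb{N}_0^n \to \mathbb{F}_q$ of period $(T_1,\ldots,T_n)$ with each such sequence having equal probability $1/q^{T_1\cdots T_n}$, we have $$\mathcal{P}\left( L_k(s) > \sqrt{(1-\epsilon_1) T_1\cdots T_n/(n-1)} \right) > 1 - \epsilon_2.$$
   Context: An $n$-dimensional sequence over $\mathbb{F}_q$ is a map $s:\mathbb{N}_0^n \to \mathbb{F}_q$. A polynomial $P(\mathbf{X}) = \sum_{\mathbf{j}} a_{\mathbf{j}} X_1^{j_1}\cdots X_n^{j_n} \in \mathbb{F}_q[X_1,\ldots,X_n]$ acts on $s$ by $(Ps)(\mathbf{m}) = \sum_{\mathbf{j}} a_{\mathbf{j}} s(\mathbf{m}+\mathbf{j})$. Let $I(s) = \{P : Ps = 0\}$, an ideal. The linear complexity $L(s)$ is the dimension of $\mathbb{F}_q[X_1,\ldots,X_n]/I(s)$ over $\mathbb{F}_q$. The sequence $s$ is periodic with period $(T_1,\ldots,T_n)$ if $X_i^{T_i}-1 \in I(s)$ for all $i$, i.e. $s(\mathbf{m}+T_i\mathbf{e}_i)=s(\mathbf{m})$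 for all $\mathbf{m}$ and $i$; such a sequence is determined by its values on $\{(m_1,\ldots,m_n): 0 \le m_i \le T_i-1\}$. For such $s$ and an integer $0\le k \le T_1\cdots T_n$, the $k$-error linear complexity $L_k(s)$ is the minimum of $L(\sigma)$ over all $(T_1,\ldots,T_n)$-periodic sequences $\sigma$ differing from $s$ in at most $k$ positions $(m_1,\ldots,m_n)$ with $0\le m_i\le T_i-1$. *)

From HB Require Import structures.
From mathcomp Require Import all_boot all_order all_algebra all_field.
From mathcomp Require Import mpoly.
From Stdlib Require Import ClassicalEpsilon.

Set Implicit Arguments.
Unset Strict Implicit.
Unset Printing Implicit Defensive.

Import Order.TTheory GRing.Theory.
Local Open Scope ring_scope.

Definition pbool (P : Prop) : bool :=
  if excluded_middle_informative P then true else false.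

Section LinComp.
Variables (F : finFieldType) (n : nat).

Definition nseqF := 'X_{1..n} -> F.

Definition poly_act (P : {mpoly F[n]}) (s : nseqF) : nseqF :=
  fun m => \sum_(j <- msupp P) P@_j * s (m + j)%MM.

Definition in_ann (s : nseqF) (P : {mpoly F[n]}) : Prop :=
  forall m, poly_act P s m = 0.

(* The images of ps in F[X]/I(s) are linearly independent over F. *)
Definition indep_mod (s : nseqF) (ps : seq {mpoly F[n]}) : Prop :=
  forall c : seq F, size c = size ps ->
    in_ann s (\sum_(i < size ps) c`_i *: ps`_i) -> forall i, c`_i = 0.

Definition quot_dim (s : nseqF) (d : nat) : Prop :=
  (exists ps, size ps = d /\ indep_mod s ps) /\
  (forall ps, indep_mod s ps -> (size ps <= d)%N).

(* Linear complexity L(s) = dim_F F[X]/I(s) (finite for periodic s;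
   set to 0 in the irrelevant infinite-dimensional case). *)
Definition lin_comp (s : nseqF) : nat :=
  match excluded_middle_informative (exists d, quot_dim s d) with
  | left H => proj1_sig (constructive_indefinite_description _ H)
  | right _ => 0%N
  end.

Variable T : 'I_n -> nat.

(* Box {(m_1..m_n) : 0 <= m_i <= T_i - 1}; for T_i > 0, (T_i).-1.+1 = T_i. *)
Definition box := {dffun forall i : 'I_n, 'I_(T i).-1.+1}.

Definition box_pt (b : box) : 'X_{1..n} := [multinom (b i : nat) | i < n].

Definition box_proj (m : 'X_{1..n}) : box :=
  [ffun i => inord (m i %% T i)].

Definition perext (f : {ffun box -> F}) : nseqF := fun m => f (box_proj m).

(* k-error linear complexity of a (T_1..T_n)-periodic sequence s:
   min of L(sigma) over periodic sigma differing from s in <= k box points.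
   (s itself is such a sigma, so the initial value lin_comp s is harmless.) *)
Definition kerr_lin_comp (k : nat) (s : nseqF) : nat :=
  \big[minn/lin_comp s]_(g : {ffun box -> F} |
       (#|[set b : box | s (box_pt b) != g b]| <= k)%N)
     lin_comp (perext g).

Definition per_prob (R : numFieldType) (E : nseqF -> Prop) : R :=
  (#|[set f : {ffun box -> F} | pbool (E (perext f))]|%:R)
  / ((#|F| ^ (\prod_(i < n) T i))%N%:R).

End LinComp.

From HB Require Import structures.
From mathcomp Require Import all_boot all_order all_algebra all_field.
From mathcomp Require Import reals.
From mathcomp Require Import ssrcomplements mpoly.
From Stdlib Require Import ClassicalEpsilon.
From mathcomp Require Import ring zify.
Import Order.TTheory GRing.Theory Num.Theory.
Local Open Scope ring_scope.
Set Implicit Arguments.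
Unset Strict Implicit.
Unset Printing Implicit Defensive.

(* Fix the degree-compatible order on exponents.  Call an exponent j of a
   sequence s standard when the shift s(. + j) is not a linear combination of
   shifts by smaller exponents.  The standard exponents form a down-closed set B
   with |B| <= L(s), and every shift of s is a combination of the shifts by B.
   Hence s is determined by its values on B together with the coefficients that
   express the shifts by the border exponents b + e_i (b in B) outside B.  As
   every nonzero standard exponent is b + e_i for a standard b, there are at most
   (n - 1)|B| + O(n) border exponents, so at most q^((n-1)L^2 + O(L log L))
   periodic sequences satisfy L(s) <= L.  A sequence with L_k(s) <= L is within
   Hamming distance k of one of them, and for e3 small enough a Hamming ball of
   radius k < e3 N has at most 2 q^(e1 N / 2) points; for (n - 1)L^2 <= (1 - e1)N
   the total is then o(q^N). *)

Lemma pboolP (P : Prop) : pbool P = true <-> P.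
Proof. by rewrite /pbool; case: excluded_middle_informative. Qed.

Lemma exists_max_seq d (T : orderType d) (r : seq T) : r != [::] ->
  exists2 x, x \in r & {in r, forall y, (y <= x)%O}.
Proof.
elim: r => [|a [|b r] IH] // _.
  by exists a; rewrite ?mem_head // => y; rewrite inE => /eqP ->.
have [x xs xmax] := IH isT.
case: (leP a x) => [ax | xa].
  exists x; first by rewrite inE xs orbT.
  by move=> y; rewrite inE => /orP [/eqP -> | /xmax].
exists a; first exact: mem_head.
by move=> y; rewrite inE => /orP [/eqP -> // | /xmax yx]; rewrite (le_trans yx) ?ltW.
Qed.

Lemma sum_delta (I : finType) (R : pzSemiRingType) (i0 : I) (f : I -> R) :
  \sum_i (i == i0)%:R * f i = f i0.
Proof.
rewrite (bigD1 i0) //= eqxx mul1r big1 ?addr0 // => i /negbTE ->; exact: mul0r.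
Qed.

Section Multinomials.
Variable n : nat.
Implicit Types (m j : 'X_{1..n}) (i : 'I_n).

Lemma subU1K j i : (0 < j i)%N -> (j - U_(i) + U_(i))%MM = j.
Proof. by move=> ji; rewrite submK // lep1mP -lt0n. Qed.

Lemma mdeg_subU1 j i : (0 < j i)%N -> mdeg (j - U_(i))%MM = (mdeg j).-1.
Proof. by move=> ji; rewrite -{2}(subU1K ji) mdegD mdeg1 addn1. Qed.

Lemma mdeg_gt0_coord j : (0 < mdeg j)%N -> exists i, (0 < j i)%N.
Proof.
rewrite lt0n mdeg_eq0 => /eqP nz0.
case: (pickP (fun i => 0 < j i)%N) => [i ji | j0]; first by exists i.
by case: nz0; apply/mnmP => i; rewrite mnm0E; apply/eqP; rewrite -leqn0 leqNgt j0.
Qed.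

Lemma coord_le_mdeg j i : (j i <= mdeg j)%N.
Proof. by rewrite mdegE (bigD1 i) //= leq_addr. Qed.

End Multinomials.

Section Action.
Variables (F : finFieldType) (n : nat).
Implicit Types (s : 'X_{1..n} -> F) (P Q : {mpoly F[n]}).

Lemma poly_act_bmnm P s m i : (msize P <= i)%N ->
  poly_act P s m = \sum_(j : 'X_{1..n < i}) P@_j * s (m + val j)%MM.
Proof.
move=> le_Pi; rewrite /poly_act (big_mksub 'X_{1..n < i}) ?msupp_uniq //=.
  by rewrite big_rmcond //= => j /memN_msupp_eq0 ->; rewrite mul0r.
by move=> x /msize_mdeg_lt /leq_trans; apply.
Qed.

Lemma poly_actD P Q s m : poly_act (P + Q) s m = poly_act P s m + poly_act Q s m.
Proof.
pose i := (msize (P + Q) + msize P + msize Q)%N.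
rewrite !(@poly_act_bmnm _ _ _ i) /i; try lia.
by rewrite -big_split; apply: eq_bigr => j _; rewrite mcoeffD mulrDl.
Qed.

Lemma poly_actZ c P s m : poly_act (c *: P) s m = c * poly_act P s m.
Proof.
pose i := maxn (msize (c *: P)) (msize P).
rewrite !(@poly_act_bmnm _ _ _ i) ?leq_maxl ?leq_maxr // mulr_sumr.
by apply: eq_bigr => j _; rewrite mcoeffZ mulrA.
Qed.

Lemma poly_act0 s m : poly_act 0 s m = 0.
Proof. by rewrite /poly_act msupp0 big_nil. Qed.

Lemma poly_act_lin k (c : 'I_k -> F) (Ps : 'I_k -> {mpoly F[n]}) s m :
  poly_act (\sum_(i < k) c i *: Ps i) s m = \sum_(i < k) c i * poly_act (Ps i) s m.
Proof.
elim/big_rec2: _ => [|i y p _ <-]; first exact: poly_act0.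
by rewrite poly_actD poly_actZ.
Qed.

Lemma poly_actX j s m : poly_act 'X_[j] s m = s (m + j)%MM.
Proof. by rewrite /poly_act msuppX big_seq1 mcoeffX eqxx mul1r. Qed.

End Action.

(** * Standard exponents *)

Section StandardExponents.
Variables (F : finFieldType) (n : nat) (s : 'X_{1..n} -> F).
Implicit Types (m j : 'X_{1..n}) (i : 'I_n).

Definition in_shift_span (P : 'X_{1..n} -> Prop) j : Prop :=
  exists2 S : seq 'X_{1..n}, {in S, forall x, P x} &
  exists c : 'X_{1..n} -> F, forall m, s (m + j)%MM = \sum_(x <- S) c x * s (m + x)%MM.

(* The standard monomials, i.e. those outside the leading ideal of I(s). *)
Definition standard j : Prop := ~ in_shift_span (fun x => (x < j)%O) j.

Lemma standard_shifts_free (J : seq 'X_{1..n}) (c : 'X_{1..n} -> F) :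
  uniq J -> {in J, forall j, standard j} ->
  (forall m, \sum_(j <- J) c j * s (m + j)%MM = 0) -> {in J, forall j, c j = 0}.
Proof.
move=> uJ stdJ rel j0 j0J; apply/eqP/negPn/negP => cj0.
have [|jm] := exists_max_seq (r := [seq j <- J | c j != 0]).
  by rewrite -has_filter; apply/hasP; exists j0.
rewrite mem_filter => /andP [cjm jmJ] jm_max; apply: (stdJ jm jmJ).
exists [seq j <- J | (j < jm)%O] => [j|]; first by rewrite mem_filter => /andP [].
exists (fun j => - c j / c jm) => m.
have top : \sum_(j <- J | ~~ (j < jm)%O) c j * s (m + j)%MM = c jm * s (m + jm)%MM.
  rewrite -big_filter (bigD1_seq jm) ?filter_uniq ?mem_filter ?ltxx //=.
  rewrite big_seq_cond big1 ?addr0 // => j; rewrite mem_filter.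
  case/andP=> /andP [jmax jJ] jjm; apply/eqP; rewrite mulf_eq0; apply/orP; left.
  by apply: contraR jmax => cj; rewrite lt_neqAle jjm jm_max // mem_filter cj.
move: (rel m); rewrite (bigID (fun j => (j < jm)%O)) /= top addrC => /eqP.
rewrite addr_eq0 => /eqP low; rewrite -[s (m + jm)%MM](mulKf cjm) low big_filter.
by rewrite mulrN mulr_sumr -sumrN; apply: eq_bigr => j _; field.
Qed.

Lemma standard_subU1 j i : standard j -> (0 < j i)%N -> standard (j - U_(i))%MM.
Proof.
move=> stdj ji [S ltS [c comb]]; apply: stdj.
exists [seq (x + U_(i))%MM | x <- S] => [_ /mapP [x xS ->]|].
  by rewrite -(subU1K ji) ltmc_add2l ltS.
exists (fun y => c (y - U_(i))%MM) => m; rewrite big_map.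
have -> : (m + j = (m + U_(i)) + (j - U_(i)))%MM.
  by rewrite -{1}(subU1K ji) [(_ + U_(i))%MM]addmC addmA.
by rewrite comb; apply: eq_bigr => x _; rewrite addmK -addmA [(U_(i) + x)%MM]addmC.
Qed.

Lemma standard_chain j : standard j -> exists l : seq 'X_{1..n},
  [/\ uniq l, size l = (mdeg j).+1 & {in l, forall x, standard x /\ (mdeg x <= mdeg j)%N}].
Proof.
move: {2}(mdeg j) (erefl (mdeg j)) => d; elim: d j => [|d IH] j dj stdj.
  by exists [:: j]; split => [||x]; rewrite ?dj // inE => /eqP ->; rewrite dj.
have [i ji] : exists i, (0 < j i)%N by apply: mdeg_gt0_coord; rewrite dj.
have dj' : mdeg (j - U_(i))%MM = d by rewrite mdeg_subU1 // dj.
have [l [ul sl ll]] := IH _ dj' (standard_subU1 stdj ji).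
exists (j :: l); split.
- by rewrite /= ul andbT; apply/negP => /ll [_]; rewrite dj' dj ltnn.
- by rewrite /= sl dj' dj.
- move=> x; rewrite inE => /orP [/eqP -> // | /ll [stdx dx]].
  by split=> //; rewrite dj (leq_trans dx) // dj'.
Qed.

Lemma shift_span_trans (S : seq 'X_{1..n}) (c : 'X_{1..n} -> F) (B : seq 'X_{1..n}) :
  {in S, forall x, exists d : 'X_{1..n} -> F,
    forall m, s (m + x)%MM = \sum_(b <- B) d b * s (m + b)%MM} ->
  exists d : 'X_{1..n} -> F, forall m,
    \sum_(x <- S) c x * s (m + x)%MM = \sum_(b <- B) d b * s (m + b)%MM.
Proof.
elim: S => [|x S IH] spanS.
  by exists (fun _ => 0) => m; rewrite big_nil big1 // => b _; rewrite mul0r.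
have [dx dxE] := spanS x (mem_head _ _).
have [|dS dSE] := IH; first by move=> y yS; apply: spanS; rewrite inE yS orbT.
exists (fun b => c x * dx b + dS b) => m.
rewrite big_cons dxE dSE mulr_sumr -big_split.
by apply: eq_bigr => b _; rewrite mulrDl mulrA.
Qed.

Variable L : nat.
Hypothesis dim_le : forall ps, indep_mod s ps -> (size ps <= L)%N.

Lemma size_standard_le (J : seq 'X_{1..n}) :
  uniq J -> {in J, forall j, standard j} -> (size J <= L)%N.
Proof.
move=> uJ stdJ; rewrite -(size_map (fun j => 'X_[j] : {mpoly F[n]})); apply: dim_le => c sc ann i.
have [iJ|] := ltnP i (size J); last by move=> Ji; rewrite nth_default // sc size_map.
have free := @standard_shifts_free J (fun j => c`_(index j J)) uJ stdJ.
rewrite -[i](index_uniq 0%MM iJ uJ) free ?mem_nth // => m.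
rewrite -[RHS](ann m) poly_act_lin (big_nth 0%MM) big_mkord size_map.
by apply: eq_bigr => k _; rewrite index_uniq // (nth_map 0%MM) ?poly_actX.
Qed.

Lemma standard_mdeg_lt j : standard j -> (mdeg j < L)%N.
Proof.
case/standard_chain => l [ul <- stdl].
by apply: size_standard_le => // x /stdl [].
Qed.

Definition standard_set : {set 'X_{1..n < L.+2}} := [set x | pbool (standard (val x))].

Definition standard_seq : seq 'X_{1..n} := [seq val x | x <- enum standard_set].

Lemma standard_seq_uniq : uniq standard_seq.
Proof. by rewrite (map_inj_uniq val_inj) enum_uniq. Qed.

Lemma mem_standard_seq j : j \in standard_seq <-> standard j.
Proof.
split=> [/mapP [x] | stdj]; first by rewrite mem_enum inE => /pboolP ? ->.
have dj : (mdeg j < L.+2)%N by rewrite (ltn_trans (standard_mdeg_lt stdj)) // ltnW.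
by apply/mapP; exists (BMultinom dj); rewrite // mem_enum inE; apply/pboolP.
Qed.

Lemma size_standard_seq : (size standard_seq <= L)%N.
Proof.
by apply: size_standard_le => [|j /mem_standard_seq]; first exact: standard_seq_uniq.
Qed.

Lemma shift_in_standard_span j : exists c : 'X_{1..n} -> F,
  forall m, s (m + j)%MM = \sum_(b <- standard_seq) c b * s (m + b)%MM.
Proof.
elim/(well_founded_ind (@ltom_wf n)): j => j IH.
case: (classic (standard j)) => [stdj | /NNPP [S ltS [c cE]]].
  exists (fun b => (b == j)%:R) => m.
  rewrite (bigD1_seq j) ?standard_seq_uniq //; last exact/mem_standard_seq.
  by rewrite eqxx mul1r big1 ?Monoid.mulm1 // => b /negbTE ->; rewrite mul0r.
have [d dE] := shift_span_trans c (fun x xS => IH x (ltS x xS)).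
by exists d => m; rewrite cE dE.
Qed.

End StandardExponents.

(** * Encodings *)

Definition nborder n L := ((n.-1) * L.+1 + n.+1).+1.

(* For each of L+1 slots: an exponent, a table index per direction, and the
   value of the sequence at that exponent; plus the table of coefficient vectors. *)
Definition code (F : finFieldType) n L :=
  ({ffun 'I_L.+1 -> {ffun 'I_n -> 'I_L.+1}} * {ffun 'I_L.+1 * 'I_n -> 'I_(nborder n L)}
   * {ffun 'I_(nborder n L) -> {ffun 'I_L.+1 -> F}} * {ffun 'I_L.+1 -> F})%type.

Definition ncodes q n L :=
  ((L.+1 ^ n) ^ L.+1 * nborder n L ^ (L.+1 * n) * (q ^ L.+1) ^ nborder n L * q ^ L.+1)%N.

Section Encoding.
Variables (F : finFieldType) (n L : nat).
Implicit Types (c : code F n L) (s : 'X_{1..n} -> F) (t : 'I_L.+1) (i : 'I_n).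

Definition code_exp c t : 'X_{1..n} := [multinom (c.1.1.1 t i : nat) | i < n].
Definition code_border c := c.1.1.2.
Definition code_table c := c.1.2.
Definition code_val c := c.2.

(* Only neighbours that are not slots themselves use the table. *)
Definition code_step c t i : 'I_L.+1 -> F :=
  if [pick t' | code_exp c t' == (code_exp c t + U_(i))%MM] is Some t0
  then fun t' => (t' == t0)%:R
  else code_table c (code_border c (t, i)).

Definition encodes c s : Prop :=
  [/\ exists t, code_exp c t = 0%MM,
      forall t i m, s (m + (code_exp c t + U_(i)))%MM
         = \sum_t' code_step c t i t' * s (m + code_exp c t')%MM
    & forall t, code_val c t = s (code_exp c t)].

Lemma encodes_shift_step c s (j : 'X_{1..n}) i (d : 'I_L.+1 -> F) : encodes c s -> (0 < j i)%N ->
  (forall m, s (m + (j - U_(i)))%MM = \sum_t d t * s (m + code_exp c t)%MM) ->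
  forall m, s (m + j)%MM
    = \sum_t' (\sum_t d t * code_step c t i t') * s (m + code_exp c t')%MM.
Proof.
move=> [_ stepE _] ji dE m.
have -> : (m + j = (m + U_(i)) + (j - U_(i)))%MM.
  by rewrite -{1}(subU1K ji) [(_ + U_(i))%MM]addmC addmA.
rewrite dE; under eq_bigr => t _.
  rewrite -addmA [(U_(i) + _)%MM]addmC stepE mulr_sumr.
  over.
rewrite exchange_big /=; apply: eq_bigr => t' _.
by rewrite mulr_suml; apply: eq_bigr => t _; rewrite mulrA.
Qed.

Lemma encodes_uniq c s1 s2 : encodes c s1 -> encodes c s2 -> s1 =1 s2.
Proof.
move=> enc1 enc2.
have comb d j : mdeg j = d -> exists e : 'I_L.+1 -> F, forall m,
    s1 (m + j)%MM = \sum_t e t * s1 (m + code_exp c t)%MM /\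
    s2 (m + j)%MM = \sum_t e t * s2 (m + code_exp c t)%MM.
  elim: d j => [|d IH] j dj.
    move/eqP: dj; rewrite mdeg_eq0 => /eqP ->.
    case: enc1 => [[t0 t0E] _ _].
    by exists (fun t => (t == t0)%:R) => m; rewrite !sum_delta t0E !addm0.
  have [i ji] : exists i, (0 < j i)%N by apply: mdeg_gt0_coord; rewrite dj.
  have [e eE] := IH (j - U_(i))%MM (etrans (mdeg_subU1 ji) (congr1 predn dj)).
  exists (fun t' => \sum_t e t * code_step c t i t') => m.
  by split; [apply: (encodes_shift_step enc1 ji) | apply: (encodes_shift_step enc2 ji)];
    move=> m'; case: (eE m').
move=> j; have [e eE] := comb _ j erefl; case: (eE 0%MM); rewrite !add0m => -> ->.
case: enc1 enc2 => [_ _ val1] [_ _ val2].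
by apply: eq_bigr => t _; rewrite !add0m -val1 -val2.
Qed.

End Encoding.

Lemma leq_border_count b n L : (b <= L)%N -> (b.+1 * n - b.-1 < nborder n L)%N.
Proof. by rewrite /nborder; case: n => [|n']; case: b => [|b] /=; nia. Qed.

Section StandardCode.
Variables (F : finFieldType) (n : nat) (s : 'X_{1..n} -> F) (L : nat).
Hypothesis dim_le : forall ps, indep_mod s ps -> (size ps <= L)%N.

Local Notation B := (standard_seq s L).

(* Slots past the end of [B] get the exponent 0; since [size B <= L], slot L is one. *)
Definition std_exp (t : nat) : 'X_{1..n} := nth 0%MM B t.

Lemma std_exp_mdeg t : (mdeg (std_exp t) <= L)%N.
Proof.
rewrite /std_exp; case: (ltnP t (size B)) => [tB | Bt]; last by rewrite nth_default ?mdeg0.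
by rewrite ltnW // (standard_mdeg_lt dim_le) //; apply/(mem_standard_seq dim_le)/mem_nth.
Qed.

Definition border_pt t (i : 'I_n) : 'X_{1..n < L.+2} := insubd bm0 (std_exp t + U_(i))%MM.

Lemma border_ptE t i : val (border_pt t i) = (std_exp t + U_(i))%MM.
Proof. by rewrite insubdK // -topredE /= mdegD mdeg1 addn1 !ltnS std_exp_mdeg. Qed.

Definition border : {set 'X_{1..n < L.+2}} :=
  [set border_pt p.1 p.2 | p : 'I_(size B).+1 * 'I_n] :\: standard_set s L.

(* Each nonzero standard exponent is a neighbour of a standard one, so at least
   [size B - 1] of the candidates are standard and are not border points. *)
Lemma card_border_lt : (#|border| < nborder n L)%N.
Proof.
set cands := [set border_pt p.1 p.2 | p : 'I_(size B).+1 * 'I_n].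
have card_cands : (#|cands| <= (size B).+1 * n)%N.
  by rewrite (leq_trans (leq_imset_card _ _)) // ?cardsT card_prod !card_ord.
have std_cands : standard_set s L :\ bm0 \subset cands :&: standard_set s L.
  apply/subsetP => x; rewrite !inE => /andP [x0 stdx]; rewrite stdx andbT.
  have [i xi] : exists i, (0 < val x i)%N.
    apply: mdeg_gt0_coord; rewrite lt0n mdeg_eq0; apply: contra x0 => /eqP x0.
    by apply/eqP/val_inj; rewrite x0.
  have stdx' : (val x - U_(i))%MM \in B.
    by apply/(mem_standard_seq dim_le); apply: (standard_subU1 _ xi); move/pboolP: stdx.
  have xB : (index (val x - U_(i))%MM B < (size B).+1)%N by rewrite ltnS ltnW ?index_mem.
  apply/imsetP; exists (Ordinal xB, i) => //; apply: val_inj.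
  by rewrite border_ptE /std_exp nth_index ?subU1K.
have card_std : #|standard_set s L| = size B by rewrite size_map cardE.
have card_cands_std : ((size B).-1 <= #|cands :&: standard_set s L|)%N.
  rewrite (leq_trans _ (subset_leq_card std_cands)) // -card_std.
  case: (boolP (bm0 \in standard_set s L)) => std0; first by rewrite (cardsD1 bm0) std0.
  by rewrite (setDidPl _) ?leq_pred // disjoint_sym disjoints1.
rewrite /border cardsD (leq_ltn_trans (leq_sub card_cands card_cands_std)) //.
exact/leq_border_count/(size_standard_seq dim_le).
Qed.

Definition std_comb (j : 'X_{1..n}) : 'X_{1..n} -> F :=
  proj1_sig (constructive_indefinite_description _ (shift_in_standard_span dim_le j)).

Lemma std_combE j m : s (m + j)%MM = \sum_(b <- B) std_comb j b * s (m + b)%MM.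
Proof.
exact: (proj2_sig (constructive_indefinite_description _ (shift_in_standard_span dim_le j))).
Qed.

Definition std_code : code F n L :=
 ([ffun t : 'I_L.+1 => [ffun i : 'I_n => inord (std_exp t i)]],
  [ffun p : 'I_L.+1 * 'I_n => inord (index (border_pt p.1 p.2) (enum border))],
  [ffun k : 'I_(nborder n L) => [ffun t' : 'I_L.+1 =>
      if (t' < size B)%N then std_comb (val (nth bm0 (enum border) k)) (std_exp t') else 0]],
  [ffun t : 'I_L.+1 => s (std_exp t)]).

Lemma code_exp_std t : code_exp std_code t = std_exp t.
Proof.
apply/mnmP => i; rewrite mnmE /= !ffunE inordK //.
by rewrite ltnS (leq_trans (coord_le_mdeg _ _)) ?std_exp_mdeg.
Qed.

Lemma sum_std_slots (f : 'X_{1..n} -> F) m :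
  \sum_(t < L.+1) (if (t < size B)%N then f (std_exp t) else 0) * s (m + std_exp t)%MM
  = \sum_(b <- B) f b * s (m + b)%MM.
Proof.
rewrite [RHS](big_nth 0%MM) big_mkord.
rewrite (big_ord_widen L.+1 (fun t => f (std_exp t) * s (m + std_exp t)%MM)).
  by rewrite [RHS]big_mkcond; apply: eq_bigr => t _; case: ifP; rewrite ?mul0r.
by rewrite ltnW // ltnS (size_standard_seq dim_le).
Qed.

Lemma border_pt_in_border t i :
  (forall t' : 'I_L.+1, std_exp t' != (std_exp t + U_(i))%MM) -> border_pt t i \in border.
Proof.
move=> not_slot; rewrite inE; apply/andP; split.
  apply/negP => std_ti.
  have ti_B : val (border_pt t i) \in B by apply/mapP; exists (border_pt t i); rewrite ?mem_enum.
  rewrite border_ptE in ti_B.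
  have ti_L : (index (std_exp t + U_(i))%MM B < L.+1)%N.
    by rewrite ltnS ltnW // (leq_trans _ (size_standard_seq dim_le)) // index_mem.
  by have := not_slot (Ordinal ti_L); rewrite /std_exp /= nth_index // eqxx.
have tB : (minn t (size B) < (size B).+1)%N by rewrite ltnS geq_minr.
apply/imsetP; exists (Ordinal tB, i) => //=; apply: val_inj; rewrite !border_ptE.
by rewrite /minn; case: ltnP => // Bt; rewrite /std_exp !nth_default.
Qed.

Lemma std_code_encodes : encodes std_code s.
Proof.
split.
- by exists ord_max; rewrite code_exp_std /std_exp nth_default // (size_standard_seq dim_le).
- move=> t i m; rewrite /code_step; case: pickP => [t0 /eqP t0E | not_slot].
    by rewrite sum_delta t0E.
  have ti_border : border_pt t i \in border.
    by apply: border_pt_in_border => t'; have := not_slot t'; rewrite !code_exp_std => ->.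
  have ti_idx : (index (border_pt t i) (enum border) < nborder n L)%N.
    by rewrite (leq_trans _ (ltnW card_border_lt)) // cardE index_mem mem_enum.
  rewrite /code_table /code_border /= !ffunE /= inordK // nth_index ?mem_enum //.
  rewrite border_ptE code_exp_std std_combE -(sum_std_slots _ m).
  by apply: eq_bigr => t' _; rewrite ffunE code_exp_std.
- by move=> t; rewrite code_exp_std ffunE.
Qed.

End StandardCode.

(** * Periodic sequences *)

Section Periodic.
Variables (F : finFieldType) (n : nat) (T : 'I_n -> nat).
Hypothesis T_gt0 : forall i, (0 < T i)%N.

Lemma card_box : #|box T| = (\prod_(i < n) T i)%N.
Proof.
rewrite card_dep_ffun foldrE big_image /=.
by apply: eq_bigr => i _; rewrite card_ord prednK.
Qed.

Lemma box_pt_coord (b : box T) i : box_pt b i = b i.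
Proof. by rewrite mnmE. Qed.

Lemma box_projK : cancel (@box_pt n T) (box_proj T).
Proof.
move=> b; apply/ffunP => i; rewrite ffunE box_pt_coord modn_small ?inord_val //.
by have := ltn_ord (b i); rewrite [X in (_ < X)%N -> _]prednK.
Qed.

Lemma perext_box (g : {ffun box T -> F}) b : perext g (box_pt b) = g b.
Proof. by rewrite /perext box_projK. Qed.

Lemma box_projD m j : box_proj T (m + j)%MM = box_proj T (box_pt (box_proj T m) + j)%MM.
Proof.
apply/ffunP => i; rewrite !ffunE; congr inord.
by rewrite !mnmDE box_pt_coord ffunE inordK ?modnDml // prednK ?ltn_pmod.
Qed.

Lemma poly_act_perext P (g : {ffun box T -> F}) m :
  poly_act P (perext g) m = poly_act P (perext g) (box_pt (box_proj T m)).
Proof. by apply: eq_bigr => j _; rewrite /perext box_projD. Qed.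

Lemma size_indep_mod_perext (g : {ffun box T -> F}) ps :
  indep_mod (perext g) ps -> (size ps <= #|box T|)%N.
Proof.
move=> indep; rewrite leqNgt; apply/negP => box_lt.
pose A : 'M[F]_(size ps, #|box T|) :=
  \matrix_(i, b) poly_act ps`_i (perext g) (box_pt (enum_val b)).
have [i0 ker_i0] : exists i0, row i0 (kermx A) != 0.
  apply/existsP; apply: contraTT box_lt => /existsPn ker0.
  have /eqP : kermx A = 0 by apply/row_matrixP => i; rewrite row0; exact/eqP/negbNE.
  by rewrite -mxrank_eq0 mxrank_ker subn_eq0 -leqNgt => /leq_trans; apply; exact: rank_leq_col.
set c := row i0 (kermx A) in ker_i0.
pose cs := mkseq (fun i => c 0 (insubd i0 i)) (size ps).
have ann : in_ann (perext g) (\sum_(i < size ps) cs`_i *: ps`_i).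
  move=> m; rewrite poly_act_lin.
  have /matrixP /(_ 0 (enum_rank (box_proj T m))) : c *m A = 0.
    by rewrite -row_mul mulmx_ker row0.
  rewrite !mxE => cA0; rewrite -[RHS]cA0; apply: eq_bigr => i _.
  by rewrite nth_mkseq // valKd; congr (_ * _); rewrite mxE enum_rankK -poly_act_perext.
have cs0 := indep cs (size_mkseq _ _) ann.
move: ker_i0; apply/negP; rewrite negbK; apply/eqP/rowP => j.
by rewrite [RHS]mxE -(cs0 j) nth_mkseq // valKd.
Qed.

Lemma quot_dim_perext (g : {ffun box T -> F}) : quot_dim (perext g) (lin_comp (perext g)).
Proof.
pose P k := pbool (exists2 ps, size ps = k & indep_mod (perext g) ps).
have P0 : exists k, P k.
  exists 0%N; apply/pboolP; exists [::] => // c /size0nil -> _ i; exact: nth_nil.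
have P_le k : P k -> (k <= #|box T|)%N.
  by move/pboolP => [ps <-]; apply: size_indep_mod_perext.
have [d /pboolP [ps ps_d ps_indep] d_max] := ex_maxnP P0 P_le.
have dim_d : quot_dim (perext g) d.
  by split=> [|ps' indep']; [exists ps | apply: d_max; apply/pboolP; exists ps'].
rewrite /lin_comp; case: excluded_middle_informative => [ex | []]; last by exists d.
exact: (proj2_sig (constructive_indefinite_description _ ex)).
Qed.

Lemma card_lin_comp_le L :
  (#|[set g : {ffun box T -> F} | (lin_comp (perext g) <= L)%N]| <= #|{: code F n L}|)%N.
Proof.
have enc (g : {ffun box T -> F}) :
    exists c : code F n L, (lin_comp (perext g) <= L)%N -> encodes c (perext g).
  case: (boolP (lin_comp (perext g) <= L)%N) => [gL | _]; last first.
    by exists ([ffun=> [ffun=> ord0]], [ffun=> ord0], [ffun=> [ffun=> 0]], [ffun=> 0]).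
  have dim_le ps : indep_mod (perext g) ps -> (size ps <= L)%N.
    by move=> indep; rewrite (leq_trans _ gL) //; case: (quot_dim_perext g) => _; apply.
  by exists (std_code dim_le) => _; apply: std_code_encodes.
pose f g := proj1_sig (constructive_indefinite_description _ (enc g)).
apply: (@leq_card_in _ _ f) => g1 g2; rewrite !inE => g1L g2L f12.
have enc1 := proj2_sig (constructive_indefinite_description _ (enc g1)) g1L.
have enc2 := proj2_sig (constructive_indefinite_description _ (enc g2)) g2L.
rewrite -/(f g1) f12 in enc1.
by apply/ffunP => b; rewrite -!perext_box (encodes_uniq enc1 enc2).
Qed.

End Periodic.

(** * Counting *)

Lemma card_bigcup_le (I T : finType) (P : pred I) (A : I -> {set T}) :
  (#|\bigcup_(i | P i) A i| <= \sum_(i | P i) #|A i|)%N.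
Proof.
elim/big_rec2: _ => [|i U x _ IH]; first by rewrite cards0.
by rewrite (leq_trans (leq_card_setU _ _)) // leq_add2l.
Qed.

Lemma card_dep_pairs_le (T1 T2 : finType) (A : {set T1}) (B : T1 -> {set T2}) m :
  {in A, forall a, #|B a| <= m}%N ->
  (#|[set p : T1 * T2 | (p.1 \in A) && (p.2 \in B p.1)]| <= #|A| * m)%N.
Proof.
move=> card_B.
have sub : [set p : T1 * T2 | (p.1 \in A) && (p.2 \in B p.1)]
    \subset \bigcup_(a in A) [set (a, b) | b in B a].
  apply/subsetP => [[a b]]; rewrite inE /= => /andP [aA bB].
  by apply/bigcupP; exists a => //; apply/imsetP; exists b.
rewrite (leq_trans (subset_leq_card sub)) // (leq_trans (card_bigcup_le _ _)) //.
rewrite -sum_nat_const leq_sum // => a aA.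
by rewrite (leq_trans (leq_imset_card _ _)) ?card_B.
Qed.

Lemma card_patches_le (U V : finType) (v0 : V) k :
  (#|[set p : {set U} * {ffun U -> V} | (#|p.1| <= k)%N && (p.2 \in pffun_on v0 p.1 predT)]|
   <= (\sum_(j < k.+1) 'C(#|U|, j)) * #|V| ^ k)%N.
Proof.
pose supp := [set S : {set U} | (#|S| <= k)%N].
pose on_supp (S : {set U}) := [set v : {ffun U -> V} | v \in pffun_on v0 S predT].
rewrite (eq_card (B := [set p | (p.1 \in supp) && (p.2 \in on_supp p.1)])); last first.
  by move=> p; rewrite !inE.
rewrite (leq_trans (card_dep_pairs_le (m := (#|V| ^ k)%N) _)) //.
  move=> S; rewrite inE => Sk; rewrite cardsE card_pffun_on cardT -cardE.
  by rewrite leq_pexp2l // cardE; case: (enum V) (mem_enum V v0).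
rewrite leq_mul //.
have -> : supp = \bigcup_(j < k.+1) [set S : {set U} | #|S| == j].
  apply/setP => S; rewrite !inE; apply/idP/bigcupP => [Sk | [j _]].
    by exists (Ordinal (Sk : (#|S| < k.+1)%N)); rewrite ?inE.
  by rewrite inE => /eqP ->; rewrite -ltnS.
by rewrite (leq_trans (card_bigcup_le _ _)) // leq_sum // => j _; rewrite card_draws.
Qed.

Lemma card_code F n L : #|{: code F n L}| = ncodes #|F| n L.
Proof. by rewrite !card_prod !card_ffun !card_prod !card_ord. Qed.

Section ErrorLinearComplexity.
Variables (F : finFieldType) (n : nat) (T : 'I_n -> nat).
Hypothesis T_gt0 : forall i, (0 < T i)%N.

Lemma kerr_lin_comp_attained k (f : {ffun box T -> F}) : exists g : {ffun box T -> F},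
  (#|[set b | f b != g b]| <= k)%N /\ lin_comp (perext g) = kerr_lin_comp T k (perext f).
Proof.
apply: (big_ind (fun v => exists g : {ffun box T -> F},
    (#|[set b | f b != g b]| <= k)%N /\ lin_comp (perext g) = v)).
- by exists f; rewrite (eq_card0 (A := [set b | f b != f b])) // => b; rewrite !inE eqxx.
- by move=> x y hx hy; rewrite /minn; case: ifP.
- move=> g; rewrite (eq_card (B := [set b | f b != g b])) => [gk|b]; first by exists g.
  by rewrite !inE perext_box.
Qed.

Lemma card_kerr_lin_comp_le k L :
  (#|[set f : {ffun box T -> F} | (kerr_lin_comp T k (perext f) <= L)%N]|
   <= #|{: code F n L}| * ((\sum_(j < k.+1) 'C(#|box T|, j)) * #|F| ^ k))%N.
Proof.
pose low := [set g : {ffun box T -> F} | (lin_comp (perext g) <= L)%N].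
pose errs := [set p : {set box T} * {ffun box T -> F} |
  (#|p.1| <= k)%N && (p.2 \in pffun_on 0 p.1 predT)].
pose patch (x : {ffun box T -> F} * ({set box T} * {ffun box T -> F})) :=
  [ffun b => if b \in x.2.1 then x.2.2 b else x.1 b].
have sub : [set f | (kerr_lin_comp T k (perext f) <= L)%N] \subset patch @: setX low errs.
  apply/subsetP => f; rewrite inE => fL.
  have [g [fg gf]] := kerr_lin_comp_attained k f.
  apply/imsetP; exists (g, ([set b | f b != g b], [ffun b => if f b != g b then f b else 0])).
    rewrite !inE /= gf fL fg; apply/forallP => b; rewrite ffunE !inE.
    by case: ifP; rewrite ?inE.
  by apply/ffunP => b; rewrite !ffunE !inE; case: (eqVneq (f b) (g b)) => [->|].
rewrite (leq_trans (subset_leq_card sub)) // (leq_trans (leq_imset_card _ _)) //.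
by rewrite cardsX leq_mul ?card_lin_comp_le ?card_patches_le.
Qed.

End ErrorLinearComplexity.

(** * Estimates *)

Section Estimates.
Local Open Scope nat_scope.

Lemma leq_expn2r m p e : m <= p -> m ^ e <= p ^ e.
Proof. by move=> mp; elim: e => // e IH; rewrite !expnS leq_mul. Qed.

Lemma leq_mul_exp2_div B x : 0 < B -> x <= B * 2 ^ (x %/ B).
Proof.
move=> B_gt0; have := ltn_pmod x B_gt0; have := divn_eq x B.
have := ltn_expl (x %/ B) (isT : 1 < 2); nia.
Qed.

Lemma expn_succ_mul_le M j e : j + e = M -> (M + 1) ^ j * e <= M ^ j.+1.
Proof.
elim: j e => [|j IH] e je; first by rewrite mul1n expn1 -je.
have := IH e.+1 (etrans (addnS j e) je); set P := (M + 1) ^ j => le_j.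
rewrite expnS [(M + 1) * P]mulnC -mulnA (expnS M j.+1).
have step : (M + 1) * e <= e.+1 * M by rewrite -je; nia.
by rewrite (leq_trans (leq_mul (leqnn P) step)) // mulnA [M * _]mulnC leq_mul.
Qed.

Lemma expn_succ_le_double M j : 2 * j <= M -> (M + 1) ^ j <= 2 * M ^ j.
Proof.
move=> jM; case: (posnP M) => [M0 | M_gt0].
  by move: jM; rewrite M0 leqn0 muln_eq0 /= => /eqP ->.
have jM' : j <= M by rewrite (leq_trans _ jM) // leq_pmull.
have := expn_succ_mul_le (subnKC jM'); rewrite expnS => le_j.
rewrite -(leq_pmul2r M_gt0) (leq_trans (leq_mul (leqnn _) (_ : M <= 2 * (M - j)))) //.
  nia.
lia.
Qed.

Lemma sum_binomial_le N k M : 0 < M -> k <= N ->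
  (\sum_(j < k.+1) 'C(N, j)) * M ^ (N - k) <= (M + 1) ^ N.
Proof.
move=> M_gt0 kN; rewrite expnDn big_distrl /=.
rewrite (big_ord_widen N.+1 (fun j => 'C(N, j) * M ^ (N - k))) ?ltnS //.
rewrite big_mkcond leq_sum // => j _; case: ifP => // jk.
by rewrite exp1n muln1 leq_mul // leq_pexp2l // leq_sub2l.
Qed.

Lemma expn_succ_le_blocks q D N : 2 <= q -> 0 < D ->
  (2 * D + 1) ^ N <= 2 * q ^ (N %/ D) * (2 * D) ^ N.
Proof.
move=> q_ge2 D_gt0; set M := 2 * D; set a := N %/ D; set r := N %% D.
have block : (M + 1) ^ D <= q * M ^ D.
  by rewrite (leq_trans (expn_succ_le_double _)) ?leq_mul2r ?q_ge2 ?orbT.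
have rest : (M + 1) ^ r <= 2 * M ^ r.
  by rewrite expn_succ_le_double // leq_mul2l ltnW ?ltn_pmod.
have -> : N = a * D + r by rewrite /a /r -divn_eq.
rewrite [a * D]mulnC expnD expnM (leq_trans (leq_mul (leq_expn2r a block) rest)) //.
by rewrite expnMn -expnM expnD; nia.
Qed.

Lemma hamming_ball_le q D N k : 2 <= q -> 0 < D -> k * (2 * D * q * D) < N ->
  (\sum_(j < k.+1) 'C(N, j)) * q ^ k <= 2 * q ^ (2 * (N %/ D)).
Proof.
move=> q_ge2 D_gt0 kN; set M := 2 * D; set a := N %/ D.
set S := \sum_(j < k.+1) 'C(N, j).
have q_gt0 : 0 < q by rewrite (leq_trans _ q_ge2).
have M_gt0 : 0 < M by rewrite muln_gt0.
have k_le_N : k <= N by rewrite ltnW // (leq_ltn_trans _ kN) // leq_pmulr ?muln_gt0 ?q_gt0 ?D_gt0.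
have qM_k : (q * M) ^ k <= q ^ a.
  rewrite (leq_trans (leq_expn2r _ (ltnW (ltn_expl (q * M) q_ge2)))) // -expnM.
  by rewrite leq_pexp2l // leq_divRL // ltnW //; move: kN; rewrite /M; nia.
have e1 : S * q ^ k * M ^ N = S * M ^ (N - k) * (q * M) ^ k.
  by rewrite -{1}(subnK k_le_N) expnD expnMn; nia.
have e2 : q ^ (2 * a) = q ^ a * q ^ a by rewrite mul2n -addnn expnD.
rewrite -(@leq_pmul2r (M ^ N)) ?expn_gt0 ?M_gt0 // e1 e2.
have := leq_mul (sum_binomial_le M_gt0 k_le_N) qM_k.
have := expn_succ_le_blocks N q_ge2 D_gt0; rewrite -/M -/a; nia.
Qed.

Lemma ncodes_le q n L B : 2 <= q -> 0 < n -> 0 < B ->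
  ncodes q n L <= q ^ ((n - 1) * L ^ 2 + (3 * n + 3) * L.+1
                        + ((2 * n + 1) * B ^ 2 + 2 * (L.+1 %/ B)) * (n * L.+1)).
Proof.
move=> q_ge2 n_gt0 B_gt0; rewrite /ncodes /nborder -mulnA; set w := L.+1.
set K := (n.-1 * w + n.+1).+1.
have -> : (w ^ n) ^ w * K ^ (w * n) = (w * K) ^ (n * w).
  by rewrite -expnM [w * n]mulnC expnMn.
have -> : (q ^ w) ^ K * q ^ w = q ^ (w * K + w) by rewrite -expnM -expnD.
have wK : w * K <= (2 * n + 1) * w ^ 2 by rewrite /K /w -subn1; nia.
have small : q ^ (w * K + w) <= q ^ ((n - 1) * L ^ 2 + (3 * n + 3) * w).
  by apply: leq_pexp2l; [exact: ltnW | clear wK; rewrite /K /w -subn1; nia].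
set u := w %/ B.
have logw : (2 * n + 1) * w ^ 2 <= q ^ ((2 * n + 1) * B ^ 2 + 2 * u).
  rewrite (leq_trans (_ : _ <= (2 * n + 1) * (B * 2 ^ u) ^ 2)) ?leq_mul2l ?leq_exp2r //.
    by rewrite leq_mul_exp2_div ?orbT.
  rewrite expnMn mulnA expnD leq_mul ?(ltnW (ltn_expl _ q_ge2)) //.
  by rewrite -expnM mulnC; apply: leq_expn2r.
have large : (w * K) ^ (n * w) <= q ^ (((2 * n + 1) * B ^ 2 + 2 * u) * (n * w)).
  by rewrite [X in _ <= X]expnM; apply: leq_expn2r; apply: leq_trans wK logw.
by rewrite (expnD q ((n - 1) * L ^ 2 + _)) mulnC leq_mul.
Qed.

Lemma lower_order_lt n D E2 c G H w u N a : 0 < D -> H = c + G * n ->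
  u * (32 * n * D) <= w -> w ^ 2 <= 4 * N -> N < a * D + D ->
  32 * D * E2 + 64 * D ^ 2 * H ^ 2 + 32 * D + 1 <= N ->
  2 * E2 + c * w + (G + 2 * u) * (n * w) < 2 * a.
Proof.
move=> D_gt0 H_def uw wN N_lt N_ge.
have quad : 16 * D * (2 * u * n * w) <= 4 * N by apply: leq_trans wN; nia.
have amgm : 16 * D * (H * w) <= 64 * D ^ 2 * H ^ 2 + 4 * N.
  by have := (nat_Cauchy (8 * D * H) w).1; nia.
have -> : 2 * E2 + c * w + (G + 2 * u) * (n * w) = 2 * E2 + H * w + 2 * u * n * w.
  by rewrite H_def; nia.
by rewrite -(ltn_pmul2l (_ : 0 < 16 * D)) ?muln_gt0 //; nia.
Qed.

(* The nat form of l <= sqrt((1 - 1/M1) N / (n - 1)). *)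
Definition low_complexity M1 n N l := M1 * ((n - 1) * l ^ 2) <= (M1 - 1) * N.

(* With D = 4 M1, the Hamming ball of radius k < N / err_den has at most
   2 q^(2N/D) <= 2 q^(N/(2 M1)) points, and above [size_bound] the remaining
   lower-order exponents fit into the other N/(2 M1) left by [low_complexity]. *)
Definition err_den q M1 := 2 * (4 * M1) * q * (4 * M1).

Definition size_bound n M1 E2 :=
  32 * (4 * M1) * E2
  + 64 * (4 * M1) ^ 2 * (3 * n + 3 + (2 * n + 1) * (32 * n * (4 * M1)) ^ 2 * n) ^ 2
  + 32 * (4 * M1) + 1.

Lemma low_complexity_sq_le n M1 N L : 2 <= n -> 0 < M1 ->
  low_complexity M1 n N L -> L ^ 2 <= N.
Proof.
move=> n_ge2 M1_gt0 L_N.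
rewrite -(leq_pmul2l M1_gt0) (leq_trans _ (leq_mul (leq_subr 1 M1) (leqnn N))) //.
by rewrite (leq_trans _ L_N) // leq_mul2l leq_pmull ?orbT // subn_gt0.
Qed.

Lemma ncodes_ball_lt q n M1 E2 N L k : 2 <= q -> 2 <= n -> 0 < M1 -> 0 < E2 ->
  size_bound n M1 E2 <= N -> low_complexity M1 n N L ->
  k * err_den q M1 < N ->
  E2 * (ncodes q n L * ((\sum_(j < k.+1) 'C(N, j)) * q ^ k)) < q ^ N.
Proof.
move=> q_ge2 n_ge2 M1_gt0 E2_gt0 N_ge L_N kN.
set D := 4 * M1; set B := 32 * n * D; set a := N %/ D; set w := L.+1.
have D_gt0 : 0 < D by rewrite muln_gt0.
have B_gt0 : 0 < B by rewrite /B /D !muln_gt0 M1_gt0 (ltnW n_ge2).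
have L2_N := low_complexity_sq_le n_ge2 M1_gt0 L_N.
have w_N : w ^ 2 <= 4 * N.
  have : 1 <= N by rewrite (leq_trans _ N_ge) // leq_addl.
  by move: L2_N; rewrite /w; clear; nia.
have budget : (n - 1) * L ^ 2 + 4 * a <= N.
  have : a * D <= N by rewrite leq_divM.
  by move: L_N n_ge2 M1_gt0; rewrite /low_complexity /D; clear; nia.
have lower : 2 * E2 + (3 * n + 3) * w + ((2 * n + 1) * B ^ 2 + 2 * (w %/ B)) * (n * w) < 2 * a.
  apply: (lower_order_lt D_gt0 erefl (leq_divM w B) w_N _ N_ge).
  by rewrite {1}(divn_eq N D) ltn_add2l ltn_pmod.
pose X := (n - 1) * L ^ 2 + (3 * n + 3) * w + ((2 * n + 1) * B ^ 2 + 2 * (w %/ B)) * (n * w).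
have codes : ncodes q n L <= q ^ X := ncodes_le L q_ge2 (ltnW n_ge2) B_gt0.
have ball : (\sum_(j < k.+1) 'C(N, j)) * q ^ k <= 2 * q ^ (2 * a).
  exact: hamming_ball_le q_ge2 D_gt0 kN.
have E2_le : 2 * E2 <= q ^ (2 * E2) := ltnW (ltn_expl _ q_ge2).
rewrite (leq_ltn_trans (leq_mul (leqnn E2) (leq_mul codes ball))) //.
have -> : E2 * (q ^ X * (2 * q ^ (2 * a))) = 2 * E2 * (q ^ X * q ^ (2 * a)).
  by rewrite [q ^ X * _]mulnCA mulnA [E2 * 2]mulnC.
rewrite (leq_ltn_trans (leq_mul E2_le (leqnn _))) // -!expnD ltn_exp2l //.
by move: lower budget; rewrite /X; clear; lia.
Qed.

End Estimates.

Lemma card_low_kerr_lt (F : finFieldType) n (T : 'I_n -> nat) M1 E2 k :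
  (forall i, 0 < T i)%N -> (2 <= n)%N -> (0 < M1)%N -> (0 < E2)%N ->
  let N := (\prod_(i < n) T i)%N in
  (size_bound n M1 E2 <= N)%N -> (k * err_den #|F| M1 < N)%N ->
  (E2 * #|[set f : {ffun box T -> F} | low_complexity M1 n N (kerr_lin_comp T k (perext f))]|
   < #|F| ^ N)%N.
Proof.
move=> T_gt0 n_ge2 M1_gt0 E2_gt0 N N_ge kN.
have low0 : exists l, low_complexity M1 n N l by exists 0%N; rewrite /low_complexity !muln0.
have low_le l : low_complexity M1 n N l -> (l <= N)%N.
  move/(low_complexity_sq_le n_ge2 M1_gt0); apply: leq_trans.
  by case: l => // l; rewrite leq_pmulr.
have [L lowL L_max] := ex_maxnP low0 low_le.
have low_kerr : [set f : {ffun box T -> F} | low_complexity M1 n N (kerr_lin_comp T k (perext f))]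
    \subset [set f | (kerr_lin_comp T k (perext f) <= L)%N].
  by apply/subsetP => f; rewrite !inE; apply: L_max.
rewrite (leq_ltn_trans (leq_mul (leqnn E2) (subset_leq_card low_kerr))) //.
rewrite (leq_ltn_trans (leq_mul (leqnn E2) (card_kerr_lin_comp_le F T_gt0 k L))) //.
rewrite card_code card_box //.
exact: (@ncodes_ball_lt _ n M1 E2 N L k (card_finNzRing_gt1 F) n_ge2 M1_gt0 E2_gt0 N_ge lowL kN).
Qed.

Section RealBounds.
Variable R : realType.

Lemma exists_inv_nat_lt (e : R) : 0 < e -> exists2 M : nat, (0 < M)%N & M%:R^-1 < e.
Proof.
move=> e_gt0; exists (Num.truncn e^-1).+1 => //.
have e_ge0 : 0 <= e^-1 by rewrite invr_ge0 ltW.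
have /andP [_ lt_e] := truncn_itv e_ge0.
by rewrite invf_plt ?posrE ?ltr0n.
Qed.

Lemma low_complexity_of_le_sqrt (e1 : R) M1 n N l :
  (0 < M1)%N -> (2 <= n)%N -> M1%:R^-1 < e1 ->
  l%:R <= Num.sqrt ((1 - e1) * N%:R / (n - 1)%:R) -> low_complexity M1 n N l.
Proof.
move=> M1_gt0 n_ge2 M1_e1; set x := _ / _ => l_x.
have [x_le0 | x_gt0] := leP x 0.
  by move: l_x; rewrite ler0_sqrtr // lern0 => /eqP ->; rewrite /low_complexity !muln0.
have n1_gt0 : 0 < (n - 1)%:R :> R by rewrite ltr0n subn_gt0.
have M1_gt0' : 0 < M1%:R :> R by rewrite ltr0n.
have : l%:R ^+ 2 <= x.
  by rewrite -(sqr_sqrtr (ltW x_gt0)) ler_sqr ?nnegrE ?sqrtr_ge0.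
rewrite /x ler_pdivlMr // => lx.
rewrite /low_complexity -(ler_nat R) !natrM [(M1 - 1)%:R]natrB //.
have e1_ge : (1 - e1) * N%:R <= (1 - M1%:R^-1) * N%:R.
  by rewrite ler_wpM2r // lerD2l lerN2 ltW.
have -> : (M1%:R - 1) * N%:R = M1%:R * ((1 - M1%:R^-1) * N%:R) :> R.
  by rewrite mulrA mulrBr mulr1 mulfV ?gt_eqF.
apply: ler_wpM2l; first exact: ltW.
by rewrite -expr2 mulrC (le_trans lx e1_ge).
Qed.

Lemma one_sub_lt_ratio (Q good bad E2 : nat) (e2 : R) :
  (0 < E2)%N -> (good + bad = Q)%N -> (E2 * bad < Q)%N -> E2%:R^-1 < e2 ->
  1 - e2 < good%:R / Q%:R.
Proof.
move=> E2_gt0 Q_def bad_lt E2_e2.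
have Q_gt0 : 0 < Q%:R :> R by rewrite ltr0n (leq_ltn_trans _ bad_lt).
have -> : good%:R / Q%:R = 1 - bad%:R / Q%:R :> R.
  apply: (mulIf (lt0r_neq0 Q_gt0)); rewrite mulrBl mul1r !mulfVK ?lt0r_neq0 //.
  by rewrite -Q_def natrD addrK.
rewrite ltrD2l ltrN2 (lt_trans _ E2_e2) // ltr_pdivrMr // mulrC ltr_pdivlMr.
  by rewrite -natrM ltr_nat mulnC.
by rewrite ltr0n.
Qed.

End RealBounds.

Unset Implicit Arguments.
Set Strict Implicit.

Theorem mainTheorem5 (R : realType) (F : finFieldType) (e1 : R) :
  0 < e1 ->
  exists2 e3 : R, 0 < e3 &
  forall n : nat, (2 <= n)%N ->
  forall e2 : R, 0 < e2 ->
  exists C : R,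
  forall T : 'I_n -> nat, (forall i, 0 < T i)%N ->
  C < (\prod_(i < n) T i)%:R ->
  forall k : nat, k%:R < e3 * (\prod_(i < n) T i)%:R ->
  1 - e2 < @per_prob F n T R
     (fun s => Num.sqrt ((1 - e1) * (\prod_(i < n) T i)%:R / (n - 1)%:R)
               < (kerr_lin_comp T k s)%:R).
Proof.
move=> e1_gt0; have [M1 M1_gt0 M1_e1] := exists_inv_nat_lt e1_gt0.
have q_gt1 := card_finNzRing_gt1 F.
have E3_gt0 : (0 < err_den #|F| M1)%N by rewrite /err_den !muln_gt0 M1_gt0 (ltnW q_gt1).
exists (err_den #|F| M1)%:R^-1; first by rewrite invr_gt0 ltr0n.
move=> n n_ge2 e2 e2_gt0; have [E2 E2_gt0 E2_e2] := exists_inv_nat_lt e2_gt0.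
exists (size_bound n M1 E2)%:R => T T_gt0 N_gt k k_lt.
set N := (\prod_(i < n) T i)%N in N_gt k_lt *.
have N_ge : (size_bound n M1 E2 <= N)%N by apply: ltnW; rewrite -(ltr_nat R).
have kN : (k * err_den #|F| M1 < N)%N.
  by rewrite -(ltr_nat R) natrM -ltr_pdivlMr ?ltr0n // mulrC.
rewrite /per_prob; set good := [set f | pbool _].
have bad_low : ~: good \subset
    [set f : {ffun box T -> F} | low_complexity M1 n N (kerr_lin_comp T k (perext f))].
  apply/subsetP => f; rewrite !inE => /negP f_bad.
  apply: (low_complexity_of_le_sqrt _ _ M1_e1) => //; rewrite leNgt.
  by apply/negP => lt_kerr; apply: f_bad; apply/pboolP.
have card_seqs : #|{: {ffun box T -> F}}| = (#|F| ^ N)%N by rewrite card_ffun card_box.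
apply: (one_sub_lt_ratio E2_gt0 (etrans (cardsC good) card_seqs) _ E2_e2).
rewrite (leq_ltn_trans (leq_mul (leqnn E2) (subset_leq_card bad_low))) //.
exact: card_low_kerr_lt.
Qed.
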